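(* Let $\mathcal{G}$ be a signed graph on vertex set $\{1,\dots,n\}$ with signed adjacency entries $a_{ij}$ and neighbor sets $N_i$, and assume $\mathcal{G}$ is structurally balanced with gauge transformation $G_t=\mathrm{diag}(\sigma_1,\dots,\sigma_n)$, $\sigma_i\in\{\pm1\}$. Consider the absolute nonlinear flow $$\dot x_i = -\sum_{j\in N_i}\big[f(x_i)-\mathrm{sgn}(a_{ij})f(x_j)\big],\quad i=1,\dots,n,$$ where $f:\mathbb{R}\to\mathbb{R}$ is a smooth odd function. Suppose $\mathcal{G}$ has a non-trivial signed automorphism $\varphi'=g\circ\varphi\circ g$, where $\varphi$ is induced by a non-identity automorphism $\phi$ of $\mathcal{G}$. Then for any vertex $l$ with $\phi(l)=l$ chosen as the leader, the leader-follower network is not accessible from the origin in $\mathbb{R}^{n-1}$. Moreover, the same conclusion holds when $f$ is a smooth even function, provided $\varphi'$ preserves edge signs, i.e. $\mathrm{sgn}(a_{ij})=\mathrm{sgn}(a_{\phi(i)\phi(j)})$ for all edges $ij$.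
   Context: A signed graph has edges with positive or negative weights $a_{ij}$ (nonzero iff $ij$ is an edge). It is structurally balanced if its vertex set admits a bipartition such that edges within each part have positive weight and edges between the parts have negative weight; equivalently there is a gauge transformation $G_t=\mathrm{diag}(\sigma)$, $\sigma_i\in\{\pm1\}$, such that $G_tA_sG_t$ has only nonnegative entries ($A_s$ the signed adjacency matrix), i.e. $\sigma_i\sigma_j=\mathrm{sgn}(a_{ij})$ for every edge $ij$. An automorphism of $\mathcal{G}$ is a permutation $\phi$ of the vertices with $\phi(i)\phi(j)$ an edge iff $ij$ is an edge; it induces $\varphi:\mathbb{R}^n\to\mathbb{R}^n$, $[\varphi(x)]_i=x_{\phi(i)}$. The gauge induces $g:\mathbb{R}^n\to\mathbb{R}^n$, $[g(x)]_i=\sigma_i x_i$. The signed automorphism is $\varphi'=g\circ\varphi\circ g$, so $[\varphi'(x)]_i=\sigma_i\sigma_{\phi(i)}x_{\phi(i)}$; it is non-trivial when $\phi$ is not the identity. For a chosen leader vertex $l$, the leader-follower network is the control system on $\mathbb{R}^{n-1}$ with state $(x_i)_{i\neq l}$, evolving by $\dot x_i=F_i(x)$ for $i\ne l$ where $F$ is the flow's right-hand side and the leader's state $x_l=u$ is treated as the control input. For a control system $\dot x=F(x,u)$, the accessible set $\mathcal{A}(x_0,\le T)$ is the set of all endpoints $\theta(\tau)$, $0\le\tau\le T$, of trajectories $\theta$ with $\theta(0)=x_0$; the system is accessible from $x_0$ if $\mathcal{A}(x_0,\le T)$ has nonempty interior for every $T>0$. *)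

From HB Require Import structures.
From mathcomp Require Import all_boot all_order all_algebra all_fingroup.
From mathcomp Require Import all_classical all_reals all_analysis.
Set Implicit Arguments. Unset Strict Implicit. Unset Printing Implicit Defensive.
Import Order.TTheory GRing.Theory Num.Theory.
Import numFieldNormedType.Exports.
Local Open Scope classical_set_scope.
Local Open Scope ring_scope.

(* A signed graph on the vertex set 'I_N is given by its signed adjacency
   matrix a : ij is an edge iff a i j != 0; the graph is undirected
   (a symmetric) and has no self-loops. *)
Definition signed_graph (R : realType) (N : nat) (a : 'I_N -> 'I_N -> R) :=
  (forall i j, a i j = a j i) /\ (forall i, a i i = 0).

Definition balanced_gauge (R : realType) (N : nat) (a : 'I_N -> 'I_N -> R)
  (sigma : 'I_N -> R) :=
  (forall i, sigma i = 1 \/ sigma i = -1) /\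
  (forall i j, a i j != 0 -> sigma i * sigma j = Num.sg (a i j)).

Definition graph_automorphism (R : realType) (N : nat) (a : 'I_N -> 'I_N -> R)
  (phi : {perm 'I_N}) :=
  forall i j, (a (phi i) (phi j) != 0) = (a i j != 0).

Definition sign_preserving (R : realType) (N : nat) (a : 'I_N -> 'I_N -> R)
  (phi : {perm 'I_N}) :=
  forall i j, a i j != 0 -> Num.sg (a i j) = Num.sg (a (phi i) (phi j)).

Definition smooth (R : realType) (f : R -> R) :=
  forall (k : nat) (x : R), derivable (derive1n k f) x 1.

Definition odd_fun (R : realType) (f : R -> R) := forall x, f (- x) = - f x.
Definition even_fun (R : realType) (f : R -> R) := forall x, f (- x) = f x.

Definition absflow (R : realType) (N : nat) (a : 'I_N -> 'I_N -> R)
  (f : R -> R) (x : 'I_N -> R) (i : 'I_N) : R :=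
  - \sum_(j < N | a i j != 0) (f (x i) - Num.sg (a i j) * f (x j)).

(* Leader-follower network with n+1 vertices and leader l: the follower
   state is y : 'rV_n (coordinate k <-> vertex lift l k), the leader's
   state is the control u. *)
Definition full_state (R : realType) (n : nat) (l : 'I_n.+1)
  (y : 'rV[R]_n) (u : R) : 'I_n.+1 -> R :=
  fun j => match unlift l j with Some k => y ord0 k | None => u end.

Definition lf_field (R : realType) (n : nat) (a : 'I_n.+1 -> 'I_n.+1 -> R)
  (f : R -> R) (l : 'I_n.+1) (y : 'rV[R]_n) (u : R) : 'rV[R]_n :=
  \row_k absflow a f (full_state l y u) (lift l k).

Definition lf_trajectory (R : realType) (n : nat) (a : 'I_n.+1 -> 'I_n.+1 -> R)
  (f : R -> R) (l : 'I_n.+1) (theta : R -> 'rV[R]_n) (tau : R) :=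
  exists u : R -> R,
    {within `[0, tau], continuous theta} /\
    (forall t, 0 < t < tau ->
       derivable theta t 1 /\ derive1 theta t = lf_field a f l (theta t) (u t)).

Definition accessible_set (R : realType) (n : nat) (a : 'I_n.+1 -> 'I_n.+1 -> R)
  (f : R -> R) (l : 'I_n.+1) (x0 : 'rV[R]_n) (T : R) : set 'rV[R]_n :=
  [set z | exists (theta : R -> 'rV[R]_n) (tau : R),
     [/\ 0 <= tau <= T, theta 0 = x0, lf_trajectory a f l theta tau
       & theta tau = z]].

Definition lf_accessible (R : realType) (n : nat) (a : 'I_n.+1 -> 'I_n.+1 -> R)
  (f : R -> R) (l : 'I_n.+1) (x0 : 'rV[R]_n) :=
  forall T : R, 0 < T -> interior (accessible_set a f l x0 T) !=set0.

From HB Require Import structures.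
From mathcomp Require Import all_boot all_order all_algebra all_fingroup.
From mathcomp Require Import all_classical all_reals all_analysis.
From mathcomp Require Import ring lra.
Import Order.TTheory GRing.Theory Num.Theory.
Import numFieldNormedType.Exports.
Set Implicit Arguments. Unset Strict Implicit. Unset Printing Implicit Defensive.
Local Open Scope classical_set_scope.
Local Open Scope ring_scope.

(* Let c_i = sigma_i sigma_(phi i) if f is odd and c_i = 1 if f is even and phi preserves
   edge signs.  In both cases f (c_i x) = c_i f x and sgn(a_ij) c_j = c_i sgn(a_(phi i)(phi j)),
   so the linear map P y = (c_k y_(phi k))_k on the follower coordinates commutes with the
   vector field of the leader-follower network for every value of the leader (phi fixes l and
   c_l = 1): P maps trajectories to trajectories with the same control.  As f is C^1 the field
   is locally Lipschitz, so by uniqueness of solutions (Gronwall) every trajectory from the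
   origin stays in the fixed space of P.  Since phi moves some follower, that fixed space is a
   proper subspace, which has empty interior; hence so does the accessible set. *)

Lemma sqr_sum_norm_le (R : realFieldType) (n : nat) (d : 'I_n -> R) :
  (\sum_k `|d k|) ^+ 2 <= n%:R * \sum_k d k ^+ 2.
Proof.
have cross k m : 2 * (`|d k| * `|d m|) <= d k ^+ 2 + d m ^+ 2.
  rewrite -(real_normK (num_real (d k))) -(real_normK (num_real (d m))).
  by have := sqr_ge0 (`|d k| - `|d m|); lra.
have double_sum : \sum_k \sum_m (d k ^+ 2 + d m ^+ 2) = 2 * n%:R * \sum_k d k ^+ 2.
  under eq_bigr do rewrite big_split /= sumr_const card_ord.
  by rewrite big_split /= sumr_const card_ord sumrMnl; ring.
have : 2 * (\sum_k `|d k|) ^+ 2 <= 2 * n%:R * \sum_k d k ^+ 2.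
  rewrite -double_sum expr2 mulr_suml mulr_sumr; apply: ler_sum => k _.
  by rewrite !mulr_sumr; apply: ler_sum => m _; exact: cross.
by rewrite -mulrA ler_pM2l.
Qed.

Lemma sum_mul_le_lipschitz (R : realFieldType) (n : nat) (d D : 'I_n -> R) (L : R) :
  0 <= L -> (forall k, `|D k| <= L * \sum_m `|d m|) ->
  \sum_k d k * D k <= L * n%:R * \sum_k d k ^+ 2.
Proof.
move=> L0 hD; apply: (@le_trans _ _ (L * (\sum_k `|d k|) ^+ 2)).
  rewrite expr2 mulrA [X in _ <= X]mulr_sumr ler_sum // => k _.
  by rewrite (le_trans (ler_norm _)) // normrM mulrC ler_wpM2r.
by rewrite -mulrA ler_wpM2l // sqr_sum_norm_le.
Qed.

Lemma is_derive_expR_scale (R : realType) (C t : R) :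
  is_derive t 1 (fun s : R => expR (C * s)) (expR (C * t) * C).
Proof.
apply: (is_derive1_comp (f := expR) (g := fun s => C * s)).
have := is_deriveZ C (@is_derive_id _ _ t 1).
rewrite scaler1; apply.
Qed.

(* [h * exp(-C t)] is nonincreasing. *)
Lemma gronwall_le0 (R : realType) (h : R -> R) (C tau : R) :
  {within `[0, tau], continuous h} ->
  (forall t, 0 < t < tau -> derivable h t 1 /\ derive1 h t <= C * h t) ->
  h 0 <= 0 -> forall t, 0 <= t <= tau -> h t <= 0.
Proof.
move=> hc hd h0 t /andP[t0 ttau].
pose e s := expR (- C * s).
have e_gt0 s : 0 < e s by exact: expR_gt0.
have he_deriv s : s \in `]0, tau[ ->
    is_derive s 1 (h * e) (h s * (e s * - C) + e s * derive1 h s).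
  rewrite in_itv /= => /hd[hs _].
  have := is_deriveM (derivableP hs) (is_derive_expR_scale (- C) s).
  by rewrite derive1E mulrC.
have he_noninc : {in `[0, tau] &, {homo h * e : x y /~ x <= y}}.
  apply: ler0_derive1_le_cc => [s /he_deriv[]//|s sI|].
  - rewrite derive1E; have [_ ->] := he_deriv s sI; move: sI; rewrite in_itv /= => /hd[_ hle].
    have -> : h s * (e s * - C) + e s * derive1 h s = e s * (derive1 h s - C * h s).
      by ring.
    by apply: mulr_ge0_le0; [exact: ltW | rewrite subr_le0].
  - move=> s; apply: continuousM; first exact: hc.
    apply: continuous_subspaceT => x; apply/differentiable_continuous/derivable1_diffP.
    by case: (is_derive_expR_scale (- C) x).
have : (h * e) t <= (h * e) 0.
  by apply: he_noninc; rewrite ?in_itv /= ?lexx ?t0 ?ttau ?(le_trans t0 ttau).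
rewrite !fctE -(pmulr_lle0 _ (e_gt0 t)) mulrC => /le_trans; apply.
by rewrite mulr_le0_ge0 // ltW.
Qed.

Lemma ode_unique_coord (R : realType) (n : nat) (z1 z2 : 'I_n -> R -> R) (L tau : R) :
  0 <= L ->
  (forall k, {within `[0, tau], continuous (z1 k)}) ->
  (forall k, {within `[0, tau], continuous (z2 k)}) ->
  (forall t, 0 < t < tau -> forall k,
     [/\ derivable (z1 k) t 1, derivable (z2 k) t 1 &
         `|derive1 (z1 k) t - derive1 (z2 k) t| <= L * \sum_m `|z1 m t - z2 m t|]) ->
  (forall k, z1 k 0 = z2 k 0) ->
  forall t, 0 <= t <= tau -> forall k, z1 k t = z2 k t.
Proof.
move=> L0 c1 c2 hd h0 t tI k.
(* Gronwall for the squared distance. *)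
pose h t := \sum_k (z1 k t - z2 k t) ^+ 2.
have h_deriv s : 0 < s < tau -> is_derive s 1 h
    (\sum_k (2 * (z1 k s - z2 k s)) * (derive1 (z1 k) s - derive1 (z2 k) s)).
  have -> : h = \sum_k (z1 k - z2 k) ^+ 2.
    by apply/funext => x; rewrite /h fct_sumE; apply: eq_bigr => j _; rewrite !fctE.
  move=> sI; apply: is_derive_sum => j; have [d1 d2 _] := hd s sI j.
  have := is_deriveX 2 (is_deriveB (derivableP d1) (derivableP d2)).
  by rewrite !derive1E expr1.
have : h t <= 0.
  apply: (@gronwall_le0 _ h (2 * L * n%:R) tau) => //.
  - move=> x; apply: cvg_big; first exact: add_continuous.
    move=> j _; exact: continuous_comp (cvgB (c1 j x) (c2 j x)) (@exprn_continuous R 2 _).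
  - move=> s sI; have [? Dh] := h_deriv s sI; split=> //; rewrite derive1E Dh.
    under eq_bigr do rewrite -mulrA.
    rewrite -mulr_sumr -!mulrA ler_pM2l // mulrA.
    by apply: sum_mul_le_lipschitz => // j; have [_ _] := hd s sI j.
  - by rewrite /h big1 // => j _; rewrite h0 subrr expr0n.
move=> ht0; have : h t == 0 by rewrite eq_le ht0 sumr_ge0 // => j _; exact: sqr_ge0.
rewrite psumr_eq0 => [/allP/(_ k (mem_index_enum k))|j _]; last exact: sqr_ge0.
by rewrite /= sqrf_eq0 subr_eq0 => /eqP.
Qed.

Lemma C1_lipschitz_on_bounded (R : realType) (f : R -> R) :
  (forall x, derivable f x 1) -> continuous (derive1 f) ->
  forall M : R, exists K : R, 0 <= K /\
    forall x y : R, `|x| <= M -> `|y| <= M -> `|f x - f y| <= K * `|x - y|.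
Proof.
move=> df cdf M.
have [MM|MM] := leP (- M) M; last first.
  by exists 0; split=> // x y xM; have := le_trans (normr_ge0 x) xM; lra.
have [c _ cmax] := @EVT_max R (fun x => `|derive1 f x|) (- M) M MM
  (continuous_subspaceT (fun x => continuous_comp (cdf x) (@norm_continuous _ R^o _))).
exists `|derive1 f c|; split=> // x y.
wlog xy : x y / x <= y.
  move=> H xM yM; have [le|le] := leP x y; first exact: H.
  by rewrite distrC (distrC x); apply: H => //; exact: ltW.
move=> xM yM.
have cf : {within `[x, y], continuous f}.
  by apply: continuous_subspaceT => z; exact/differentiable_continuous/derivable1_diffP.
have f_deriv (z : R) : is_derive z 1 f (derive1 f z) by rewrite derive1E; exact: derivableP.
have [d dI fE] := MVT_segment xy (fun z _ => f_deriv z) cf.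
rewrite distrC fE normrM distrC ler_wpM2r // cmax //.
move: dI xM yM; rewrite !in_itv /= !ler_norml => /andP[? ?] /andP[? ?] /andP[? ?].
apply/andP; split; lra.
Qed.

Lemma smooth_continuous_derive1 (R : realType) (f : R -> R) :
  smooth f -> continuous (derive1 f).
Proof.
by move=> sf x; apply/differentiable_continuous/derivable1_diffP; exact: (sf 1%N x).
Qed.

Lemma continuous_row_bounded (R : realType) (n : nat) (th : R -> 'rV[R]_n) (a b : R) :
  {within `[a, b], continuous th} ->
  exists M : R, forall t, a <= t <= b -> forall m, `|th t ord0 m| <= M.
Proof.
move=> hc.
have [M0 [_ HM]] := compact_bounded (continuous_compact hc (@segment_compact R a b)).
exists (`|M0| + 1) => t tI m.
have thM : `|th t| <= `|M0| + 1.
  by apply: HM; [have := ler_norm M0; lra | exists t => //=; rewrite in_itv /= tI].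
apply: le_trans thM; rewrite [leRHS]/Num.Def.normr /= mx_normrE.
exact: (le_bigmax _ _ (ord0, m)).
Qed.

Lemma within_continuous_coord (R : realType) (n : nat) (th : R -> 'rV[R]_n) (A : set R) k :
  {within A, continuous th} -> {within A, continuous (fun t => th t ord0 k)}.
Proof. by move=> hc x; exact: continuous_comp (hc x) (@coord_continuous R _ _ ord0 k (th x)). Qed.

Lemma derivable_coord (R : realType) (n : nat) (th : R -> 'rV[R]_n) t k :
  derivable th t 1 ->
  derivable (fun s => th s ord0 k) t 1 /\ derive1 (fun s => th s ord0 k) t = derive1 th t ord0 k.
Proof.
move=> hd; split; first exact: (derivable_mxP th t 1).1 hd ord0 k.
by rewrite !derive1E derive_mx // mxE.
Qed.

Lemma absflow_lipschitz (R : realType) (N : nat) (a : 'I_N -> 'I_N -> R) (f : R -> R)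
    (x1 x2 : 'I_N -> R) (D : R) :
  (forall j, `|f (x1 j) - f (x2 j)| <= D) ->
  forall i, `|absflow a f x1 i - absflow a f x2 i| <= 2 * N%:R * D.
Proof.
move=> fD i; have D0 : 0 <= D := le_trans (normr_ge0 _) (fD i).
rewrite /absflow opprK addrC -sumrB (le_trans (ler_norm_sum _ _ _)) //.
apply: (@le_trans _ _ (\sum_(j < N | a i j != 0) 2 * D)).
  apply: ler_sum => j aij.
  have -> : f (x2 i) - Num.sg (a i j) * f (x2 j) - (f (x1 i) - Num.sg (a i j) * f (x1 j))
      = (f (x2 i) - f (x1 i)) + Num.sg (a i j) * (f (x1 j) - f (x2 j)) by ring.
  rewrite (le_trans (ler_normD _ _)) // normrM normr_sg aij mul1r mulr_natl mulr2n.
  by rewrite lerD // distrC.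
rewrite [leRHS](_ : _ = \sum_(j < N) 2 * D); last first.
  by rewrite sumr_const card_ord -[(2 * D) *+ N]mulr_natr mulrAC.
by rewrite [leRHS](bigID (fun j => a i j != 0)) /= lerDl sumr_ge0 // => j _; rewrite mulr_ge0.
Qed.

Lemma lf_field_lipschitz (R : realType) (n : nat) (a : 'I_n.+1 -> 'I_n.+1 -> R) (f : R -> R)
    (l : 'I_n.+1) (K M : R) (y1 y2 : 'rV[R]_n) (u : R) :
  0 <= K -> (forall x y, `|x| <= M -> `|y| <= M -> `|f x - f y| <= K * `|x - y|) ->
  (forall m, `|y1 ord0 m| <= M) -> (forall m, `|y2 ord0 m| <= M) ->
  forall k, `|lf_field a f l y1 u ord0 k - lf_field a f l y2 u ord0 k| <=
    2 * (n.+1)%:R * K * \sum_m `|y1 ord0 m - y2 ord0 m|.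
Proof.
move=> K0 fK y1M y2M k; rewrite !mxE -mulrA; apply: absflow_lipschitz => j.
rewrite /full_state; case: (unliftP l j) => [m _|_].
  rewrite (le_trans (fK _ _ (y1M m) (y2M m))) // ler_wpM2l // (bigD1 m) //= lerDl.
  by rewrite sumr_ge0.
by rewrite subrr normr0 mulr_ge0 ?sumr_ge0.
Qed.

Lemma absflow_signed_perm (R : realType) (N : nat) (a : 'I_N -> 'I_N -> R) (f : R -> R)
    (phi : {perm 'I_N}) (c : 'I_N -> R) :
  graph_automorphism a phi ->
  (forall i x, f (c i * x) = c i * f x) ->
  (forall i j, a i j != 0 -> Num.sg (a i j) * c j = c i * Num.sg (a (phi i) (phi j))) ->
  forall x i, absflow a f (fun j => c j * x (phi j)) i = c i * absflow a f x (phi i).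
Proof.
move=> phi_aut f_equiv sg_equiv x i; rewrite /absflow mulrN mulr_sumr.
rewrite (reindex_inj (@perm_inj _ phi) (P := fun j => a (phi i) j != 0)) /=.
congr (- _); under [RHS]eq_bigl do rewrite phi_aut.
by apply: eq_bigr => j aij; rewrite !f_equiv mulrBr mulrA sg_equiv //; ring.
Qed.

(* The default [k] is never used when [phi l = l]. *)
Definition follower_index (n : nat) (l : 'I_n.+1) (phi : {perm 'I_n.+1}) (k : 'I_n) : 'I_n :=
  odflt k (unlift l (phi (lift l k))).

Lemma lift_follower_index (n : nat) (l : 'I_n.+1) (phi : {perm 'I_n.+1}) (k : 'I_n) :
  phi l = l -> lift l (follower_index l phi k) = phi (lift l k).
Proof.
move=> phil; rewrite /follower_index; case: (unliftP l (phi (lift l k))) => [k' -> //|e].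
by have := neq_lift l k; rewrite (perm_inj (etrans e (esym phil))) eqxx.
Qed.

(* The signed automorphism [x |-> (c_i x_(phi i))_i] acting on the follower coordinates;
   the paper's [g \o varphi \o g] has [c_i = sigma_i sigma_(phi i)]. *)
Definition signed_perm_row (R : realType) (n : nat) (l : 'I_n.+1) (phi : {perm 'I_n.+1})
    (c : 'I_n.+1 -> R) (y : 'rV[R]_n) : 'rV[R]_n :=
  \row_k (c (lift l k) * y ord0 (follower_index l phi k)).

Lemma signed_perm_row_fixed_interior (R : realType) (n : nat) (l : 'I_n.+1)
    (phi : {perm 'I_n.+1}) (c : 'I_n.+1 -> R) :
  phi l = l -> phi != 1%g -> interior [set y : 'rV[R]_n | signed_perm_row l phi c y = y] = set0.
Proof.
move=> phil phi1.
have [i phii] : exists i, phi i != i.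
  apply/existsP; apply: contraR phi1; rewrite negb_exists => /forallP phi_id.
  by apply/eqP/permP => i; rewrite perm1; apply/eqP; rewrite -[_ == _]negbK.
have [k ik] : exists k, i = lift l k.
  case: (unliftP l i) => [k ->|e]; first by exists k.
  by move: phii; rewrite e phil eqxx.
have kk : follower_index l phi k != k.
  by apply: contraNneq phii => e; rewrite ik -(lift_follower_index _ phil) e.
(* Moving coordinate k leaves the fixed space: the image reads coordinate k off another one. *)
apply/seteqP; split => // z /nbhs_ballP[e /= e0 zball].
pose v : 'rV[R]_n := \row_j (if j == k then e / 2 else 0).
have zv_ball : ball z e (z + v).
  rewrite -ball_normE /= opprD addNKr normrN /Num.Def.normr /= mx_normrE.
  apply: (@le_lt_trans _ _ (e / 2)); last by lra.
  apply: bigmax_le => [|j _]; first by rewrite divr_ge0 // ltW.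
  by rewrite mxE; case: ifP => _; rewrite ?normr0 ?ger0_norm ?divr_ge0 // ltW.
have /rowP/(_ k) := zball _ zv_ball; have /rowP/(_ k) := zball _ (ballxx _ e0).
rewrite /signed_perm_row !mxE eqxx (negbTE kk) addr0 => ->; lra.
Qed.

Section SignedSymmetry.

Variables (R : realType) (n : nat) (a : 'I_n.+1 -> 'I_n.+1 -> R) (f : R -> R).
Variables (l : 'I_n.+1) (phi : {perm 'I_n.+1}) (c : 'I_n.+1 -> R).
Hypothesis phi_aut : graph_automorphism a phi.
Hypothesis f_equiv : forall i x, f (c i * x) = c i * f x.
Hypothesis sg_equiv :
  forall i j, a i j != 0 -> Num.sg (a i j) * c j = c i * Num.sg (a (phi i) (phi j)).
Hypothesis phil : phi l = l.
Hypothesis cl : c l = 1.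

Local Notation P := (signed_perm_row l phi c).

Lemma full_state_signed_perm y u :
  full_state l (P y) u = fun j => c j * full_state l y u (phi j).
Proof.
apply/funext => j; rewrite /full_state; case: (unliftP l j) => [k ->|->].
  by rewrite mxE -lift_follower_index // liftK.
by rewrite phil cl mul1r unlift_none.
Qed.

Lemma lf_field_signed_perm y u : lf_field a f l (P y) u = P (lf_field a f l y u).
Proof.
apply/rowP => k; rewrite !mxE full_state_signed_perm absflow_signed_perm //.
by rewrite -lift_follower_index.
Qed.

Lemma signed_perm_row_coordE (th : R -> 'rV[R]_n) k :
  (fun s => P (th s) ord0 k) = (fun s => c (lift l k) * th s ord0 (follower_index l phi k)).
Proof. by apply/funext => s; rewrite mxE. Qed.

Lemma derivable_signed_perm_coord (th : R -> 'rV[R]_n) t k : derivable th t 1 ->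
  derivable (fun s => P (th s) ord0 k) t 1 /\
  derive1 (fun s => P (th s) ord0 k) t = P (derive1 th t) ord0 k.
Proof.
move=> dth; have [d D] := derivable_coord (follower_index l phi k) dth.
have Pth_deriv : is_derive t 1 (fun s => P (th s) ord0 k)
    (c (lift l k) * derive1 th t ord0 (follower_index l phi k)).
  by rewrite signed_perm_row_coordE -D; apply: is_deriveZ; rewrite derive1E; exact: derivableP.
split; first by case: Pth_deriv.
by rewrite derive1E derive_val mxE.
Qed.

Hypothesis c_unit : forall i, `|c i| = 1.

Lemma lf_trajectory_signed_perm_fixed (th : R -> 'rV[R]_n) tau :
  smooth f -> 0 <= tau -> th 0 = 0 -> lf_trajectory a f l th tau -> P (th tau) = th tau.
Proof.
move=> sf tau0 th0 [u [th_cont th_ode]].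
have [M thM] := continuous_row_bounded th_cont.
have PthM t : 0 <= t <= tau -> forall m, `|P (th t) ord0 m| <= M.
  by move=> tI m; rewrite mxE normrM c_unit mul1r thM.
have [K [K0 fK]] :=
  C1_lipschitz_on_bounded (fun x => sf 0%N x) (smooth_continuous_derive1 sf) M.
suff agree : forall t, 0 <= t <= tau -> forall k, th t ord0 k = P (th t) ord0 k.
  by apply/rowP => k; rewrite -agree // lexx tau0.
apply: (@ode_unique_coord _ _ (fun k t => th t ord0 k) (fun k t => P (th t) ord0 k)
  (2 * (n.+1)%:R * K)).
- by rewrite !mulr_ge0.
- by move=> k; exact: within_continuous_coord.
- move=> k x; rewrite /= signed_perm_row_coordE; apply: cvgM; first exact: cvg_cst.
  exact: within_continuous_coord.
- move=> t tI k; have [dth Dth] := th_ode t tI.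
  have [d1 D1] := derivable_coord k dth.
  have [d2 D2] := derivable_signed_perm_coord k dth.
  have tI' : 0 <= t <= tau by case/andP: tI => /ltW -> /ltW ->.
  split=> //; rewrite D1 D2 Dth -lf_field_signed_perm.
  exact: lf_field_lipschitz _ _ _ K0 fK (thM t tI') (PthM t tI') k.
- by move=> k; rewrite th0 !mxE mulr0.
Qed.

Lemma accessible_set_signed_perm_fixed T :
  smooth f -> accessible_set a f l 0 T `<=` [set y | P y = y].
Proof.
move=> sf _ [th [tau [/andP[tau0 _] th0 th_traj <-]]].
exact: lf_trajectory_signed_perm_fixed.
Qed.

Lemma not_lf_accessible_signed_perm : smooth f -> phi != 1%g -> ~ lf_accessible a f l 0.
Proof.
move=> sf phi1 acc; have [z zint] := acc 1 ltr01.
have : interior [set y | P y = y] z.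
  by apply: interiorS zint; exact: accessible_set_signed_perm_fixed.
by rewrite signed_perm_row_fixed_interior.
Qed.

End SignedSymmetry.

Definition is_sign (R : pzRingType) (s : R) := s = 1 \/ s = -1.

Lemma is_signM (R : pzRingType) (s t : R) : is_sign s -> is_sign t -> is_sign (s * t).
Proof.
by case=> ->; case=> ->; rewrite ?mul1r ?mulN1r ?opprK; [left|right|right|left].
Qed.

Lemma is_sign_sqr (R : pzRingType) (s : R) : is_sign s -> s * s = 1.
Proof. by case=> ->; rewrite ?mulr1 ?mulrNN ?mulr1. Qed.

Lemma odd_fun_mul_sign (R : realType) (f : R -> R) (s x : R) :
  odd_fun f -> is_sign s -> f (s * x) = s * f x.
Proof. by move=> f_odd [->|->]; rewrite ?mul1r // !mulN1r f_odd. Qed.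

Lemma balanced_gauge_sg_twist (R : realType) (N : nat) (a : 'I_N -> 'I_N -> R)
    (sigma : 'I_N -> R) (phi : {perm 'I_N}) :
  balanced_gauge a sigma -> graph_automorphism a phi ->
  forall i j, a i j != 0 ->
    Num.sg (a i j) * (sigma j * sigma (phi j)) =
    sigma i * sigma (phi i) * Num.sg (a (phi i) (phi j)).
Proof.
move=> [sigma_sign sigma_sg] phi_aut i j aij.
have aij' : a (phi i) (phi j) != 0 by rewrite phi_aut.
rewrite -(sigma_sg _ _ aij) -(sigma_sg _ _ aij').
rewrite -[LHS]mulrA (mulrA (sigma j)) is_sign_sqr // mul1r.
by rewrite -[RHS]mulrA (mulrA (sigma (phi i))) is_sign_sqr // mul1r.
Qed.

Theorem theorem4 (R : realType) (n : nat) (a : 'I_n.+1 -> 'I_n.+1 -> R)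
  (sigma : 'I_n.+1 -> R) (phi : {perm 'I_n.+1}) (f : R -> R) (l : 'I_n.+1) :
  signed_graph a ->
  balanced_gauge a sigma ->
  graph_automorphism a phi ->
  phi != 1%g ->
  phi l = l ->
  smooth f ->
  (odd_fun f \/ (even_fun f /\ sign_preserving a phi)) ->
  ~ lf_accessible a f l 0.
Proof.
move=> _ sigma_bal phi_aut phi1 phil sf [f_odd | [_ sg_pres]].
- have c_sign i : is_sign (sigma i * sigma (phi i)).
    by apply: is_signM; apply: sigma_bal.1.
  apply: (not_lf_accessible_signed_perm (c := fun i => sigma i * sigma (phi i))) => //.
  + by move=> i x; apply: odd_fun_mul_sign.
  + exact: balanced_gauge_sg_twist.
  + by rewrite phil is_sign_sqr //; apply: sigma_bal.1.
  + by move=> i; case: (c_sign i) => ->; rewrite ?normrN normr1.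
- apply: (not_lf_accessible_signed_perm (c := fun=> 1)) => //.
  + by move=> i x; rewrite !mul1r.
  + by move=> i j aij; rewrite mulr1 mul1r sg_pres.
  + by move=> i; rewrite normr1.
Qed.
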